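(* Let $R$ be a finite commutative local Frobenius ring with residue field $\mathbb{F}_q$. For $i=1,2$, let $C_i$ be a free linear code of length $n$ over $R$ with generator matrix $\mathrm{G}_i$ and parity check matrix $\mathrm{H}_i$, such that $C_1+C_2=R^n$. Then the following are equivalent: (1) $C_1$ and $C_2$ form an LCP; (2) $\begin{pmatrix}\mathrm{G}_1\\ \mathrm{G}_2\end{pmatrix}$ is invertible over $R$; (3) $\begin{pmatrix}\mathrm{H}_1\\ \mathrm{H}_2\end{pmatrix}$ is invertible over $R$; (4) $\texttt{Rank}_q(\mathrm{H}_2\mathrm{G}_1^\top)=\texttt{Rank}_q(\mathrm{G}_1)$ or $\texttt{Rank}_q(\mathrm{H}_1\mathrm{G}_2^\top)=\texttt{Rank}_q(\mathrm{G}_2)$.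
   Context: A linear code of length $n$ over $R$ is an $R$-submodule of $R^n$; free means free as an $R$-module. A pair $\{C_1,C_2\}$ is a linear complementary pair (LCP) if $C_1\cap C_2=\{\mathbf{0}\}$ and $C_1+C_2=R^n$. A generator matrix of a free code is a matrix whose rows form a basis of the code; a parity check matrix of $C$ is a generator matrix of $C^\perp$ with respect to the standard inner product $\sum_j u_jc_j$. For a matrix $\mathrm{A}$ over $R$, $\texttt{Rank}_q(\mathrm{A}):=\log_q|M|$ where $M$ is the $R$-submodule spanned by the rows of $\mathrm{A}$. *)

From HB Require Import structures.
From mathcomp Require Import all_boot all_order all_algebra all_field.
Set Implicit Arguments. Unset Strict Implicit. Unset Printing Implicit Defensive.
Import GRing.Theory.
Local Open Scope ring_scope.

(* A commutative ring is local iff its non-units form an ideal,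
   i.e. the non-units are closed under addition (the set of non-units is then
   the unique maximal ideal). *)
Definition is_local_ring (R : finComUnitRingType) : Prop :=
  forall x y : R, x \isn't a GRing.unit -> y \isn't a GRing.unit ->
    x + y \isn't a GRing.unit.

Definition max_ideal (R : finComUnitRingType) : {set R} :=
  [set x : R | x \isn't a GRing.unit].

(* Size q of the residue field R/m (index of m in (R,+)). *)
Definition residue_card (R : finComUnitRingType) : nat :=
  (#|R| %/ #|max_ideal R|)%N.

(* Finite Frobenius ring: (R,+) admits a generating character, i.e. an
   additive character chi : (R,+) -> C^x whose kernel contains no nonzero
   ideal. *)
Definition is_frobenius (R : finComUnitRingType) : Prop :=
  exists chi : R -> algC,
    [/\ chi 0 = 1,
        (forall x y : R, chi (x + y) = chi x * chi y) &
        (forall a : R, a != 0 -> exists r : R, chi (r * a) != 1)].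

Definition rowspan (R : finComUnitRingType) (m n : nat) (A : 'M[R]_(m, n))
  : {set 'rV[R]_n} := [set x *m A | x : 'rV[R]_m].

Definition rows_free (R : finComUnitRingType) (m n : nat) (A : 'M[R]_(m, n))
  : Prop := forall x : 'rV[R]_m, x *m A = 0 -> x = 0.

Definition is_generator_matrix (R : finComUnitRingType) (k n : nat)
  (G : 'M[R]_(k, n)) (C : {set 'rV[R]_n}) : Prop :=
  rows_free G /\ rowspan G = C.

Definition dual_code (R : finComUnitRingType) (n : nat) (C : {set 'rV[R]_n})
  : {set 'rV[R]_n} :=
  [set u : 'rV[R]_n | [forall c in C, u *m c^T == 0]].

Definition is_linear_code (R : finComUnitRingType) (n : nat)
  (C : {set 'rV[R]_n}) : Prop :=
  0 \in C /\ forall (a : R) (u v : 'rV[R]_n), u \in C -> v \in C -> a *: u + v \in C.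

Definition code_sum (R : finComUnitRingType) (n : nat)
  (C1 C2 : {set 'rV[R]_n}) : {set 'rV[R]_n} :=
  [set x + y | x in C1, y in C2].

Definition is_LCP (R : finComUnitRingType) (n : nat)
  (C1 C2 : {set 'rV[R]_n}) : Prop :=
  C1 :&: C2 = [set 0] /\ code_sum C1 C2 = [set: 'rV[R]_n].

Definition mx_invertible (R : finComUnitRingType) (p r : nat)
  (A : 'M[R]_(p, r)) : Prop :=
  exists B : 'M[R]_(r, p), A *m B = 1%:M /\ B *m A = 1%:M.

(* Rank_q(A) = log_q |rowspan A|  (|rowspan A| is always a power of q). *)
Definition Rank_q (R : finComUnitRingType) (m n : nat) (A : 'M[R]_(m, n))
  : nat := trunc_log (residue_card R) #|rowspan A|.

From HB Require Import structures.
From mathcomp Require Import all_boot all_order all_algebra all_field.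
From mathcomp Require Import zify.
Set Implicit Arguments.
Unset Strict Implicit.
Unset Printing Implicit Defensive.

Import GRing.Theory.
Local Open Scope ring_scope.

(* Over a finite local ring a matrix with free rows has a unit entry in each
   row (otherwise a nonzero element of the socle would kill that row), so
   Gaussian elimination makes u |-> G u onto, and counting fibres gives
   k + m = n for a free code of rank k whose dual is free of rank m.
   With C_i the row span of G_i and C_1 + C_2 = R^n, the pair is an LCP iff
   the k_1 + k_2 rows of (G_1; G_2) are free, i.e. iff k_1 + k_2 = n.  The
   duals meet trivially since C_1 + C_2 = R^n, so (H_1; H_2), H_2 G_1^T and
   H_1 G_2^T have free rows; hence (H_1; H_2) is invertible iff
   m_1 + m_2 = n, and since Rank_q is injective on numbers of free rows
   (as 1 < q <= |R|), the rank conditions read m_2 = k_1 and m_1 = k_2.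
   All of these say k_1 + k_2 = n. *)

Lemma trunc_log_expn_inj q b :
  (1 < q)%N -> (q <= b)%N -> injective (fun m => trunc_log q (b ^ m)).
Proof.
move=> q_gt1 le_qb; apply/incn_inj/leq_mono.
apply: homo_ltn => [? ? ? /ltn_trans | m]; first exact.
apply: trunc_log_max => //; rewrite !expnS leq_mul // trunc_logP // expn_gt0.
by rewrite (leq_trans _ le_qb) // ltnW.
Qed.

Section RowSpan.

Variable R : finComUnitRingType.
Implicit Types (p r n : nat).

Lemma expn_card_inj : injective (expn #|R|).
Proof. by move=> a b /eqP; rewrite eqn_exp2l ?card_finNzRing_gt1 // => /eqP. Qed.

Lemma rowspan_mulmx p r (A : 'M[R]_(p, r)) x : x *m A \in rowspan A.
Proof. exact: imset_f. Qed.

Lemma rowspanP p r (A : 'M[R]_(p, r)) y :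
  reflect (exists x, y = x *m A) (y \in rowspan A).
Proof. by apply: (iffP imsetP) => [[x _ ->] | [x ->]]; exists x. Qed.

Lemma rows_free_injP p r (A : 'M[R]_(p, r)) :
  rows_free A <-> injective (fun x : 'rV[R]_p => x *m A).
Proof.
split=> [freeA x y /= /eqP | injA x xA0].
  by rewrite -subr_eq0 -mulmxBl => /eqP /freeA /eqP; rewrite subr_eq0 => /eqP.
by apply: injA; rewrite /= xA0 mul0mx.
Qed.

Lemma rows_free_card p r (A : 'M[R]_(p, r)) :
  rows_free A <-> #|rowspan A| = (#|R| ^ p)%N.
Proof.
have cardT : #|'rV[R]_p| = (#|R| ^ p)%N by rewrite card_mx mul1n.
rewrite -cardT; split=> [/rows_free_injP injA | /eqP/imset_injP injA].
  exact: card_imset.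
by apply/rows_free_injP=> x y; apply: injA.
Qed.

Lemma rowspanT_card p r (A : 'M[R]_(p, r)) :
  rowspan A = setT <-> #|rowspan A| = (#|R| ^ r)%N.
Proof.
have cardT : #|[set: 'rV[R]_r]| = (#|R| ^ r)%N by rewrite cardsT card_mx mul1n.
rewrite -cardT; split=> [-> // | cardA].
by apply/eqP; rewrite eqEcard subsetT cardA leqnn.
Qed.

Lemma rowspan_section p r (A : 'M[R]_(p, r)) :
  exists sec : 'rV_r -> 'rV_p, {in rowspan A, forall y, sec y *m A = y}.
Proof.
exists (fun y => odflt 0 [pick x | x *m A == y]) => _ /rowspanP[x0 ->].
by case: pickP => [x /eqP // | /(_ x0)]; rewrite eqxx.
Qed.

Lemma mx_invertibleP p r (A : 'M[R]_(p, r)) :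
  mx_invertible A <-> rows_free A /\ rowspan A = setT.
Proof.
split=> [[B [AB BA]] | [/rows_free_injP injA spanA]].
  split.
    by apply/rows_free_injP=> x y /(congr1 (mulmx^~ B)); rewrite /= -!mulmxA AB !mulmx1.
  apply/eqP; rewrite eqEsubset subsetT; apply/subsetP=> y _.
  by apply/rowspanP; exists (y *m B); rewrite -mulmxA BA mulmx1.
have [sec secK] := rowspan_section A.
pose B := \matrix_(i < r) sec (delta_mx 0 i).
have BA : B *m A = 1%:M.
  by apply/row_matrixP=> i; rewrite row_mul rowK row1 secK // spanA inE.
exists B; split=> //; apply/row_matrixP=> i; apply: injA.
by rewrite /= -!row_mul -mulmxA BA mulmx1 mul1mx.
Qed.

Lemma rowspan_col_mx p1 p2 n (A1 : 'M[R]_(p1, n)) (A2 : 'M[R]_(p2, n)) :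
  rowspan (col_mx A1 A2) = code_sum (rowspan A1) (rowspan A2).
Proof.
apply/setP=> y; apply/rowspanP/imset2P=> [[x ->] | ].
  rewrite -[x]hsubmxK mul_row_col.
  by exists (lsubmx x *m A1) (rsubmx x *m A2); rewrite ?rowspan_mulmx.
case=> _ _ /rowspanP[x1 ->] /rowspanP[x2 ->] ->.
by exists (row_mx x1 x2); rewrite mul_row_col.
Qed.

Lemma rows_free_col_mxP p1 p2 n (A1 : 'M[R]_(p1, n)) (A2 : 'M[R]_(p2, n)) :
  rows_free A1 -> rows_free A2 ->
  rows_free (col_mx A1 A2) <-> rowspan A1 :&: rowspan A2 = [set 0].
Proof.
move=> free1 free2; split=> [freeA | capA x].
  apply/setP=> y; rewrite !inE; apply/andP/eqP=> [[] | ->]; last first.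
    by split; apply/rowspanP; exists 0; rewrite mul0mx.
  move=> /rowspanP[x1 ->] /rowspanP[x2 E].
  have /eqP : row_mx x1 (- x2) = 0.
    by apply: freeA; rewrite mul_row_col mulNmx E subrr.
  by rewrite row_mx_eq0 => /andP[/eqP -> _]; rewrite mul0mx.
rewrite -[x]hsubmxK mul_row_col => /eqP; rewrite addr_eq0 -mulNmx => /eqP E.
have /free1 x1_0 : lsubmx x *m A1 = 0.
  by apply/set1P; rewrite -capA inE {2}E !rowspan_mulmx.
have /free2 x2_0 : rsubmx x *m A2 = 0.
  by rewrite -[rsubmx x]opprK mulNmx -E x1_0 mul0mx oppr0.
by rewrite x1_0 x2_0 row_mx0.
Qed.

Lemma card_rowspan_ker p r (A : 'M[R]_(p, r)) :
  (#|R| ^ p = #|rowspan A| * #|[set x : 'rV_p | x *m A == 0%R]|)%N.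
Proof.
have [sec secK] := rowspan_section A.
pose K := [set x : 'rV_p | x *m A == 0].
pose F (yz : 'rV_r * 'rV_p) := sec yz.1 + yz.2.
have injF : {in setX (rowspan A) K &, injective F}.
  move=> [y1 z1] [y2 z2] /setXP[/= y1A z1K] /setXP[/= y2A z2K] E.
  move: z1K z2K; rewrite !inE => /eqP z1K /eqP z2K.
  have Ey : y1 = y2.
    by have := congr1 (mulmx^~ A) E; rewrite /F /= !mulmxDl z1K z2K !addr0 !secK.
  by move: E; rewrite /F /= Ey => /addrI ->.
have imF : F @: setX (rowspan A) K = setT.
  apply/setP=> x; rewrite inE; apply/imsetP; exists (x *m A, x - sec (x *m A)).
    by rewrite inE rowspan_mulmx inE /= mulmxBl secK ?rowspan_mulmx ?subrr.
  by rewrite /F /= addrC subrK.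
by rewrite -cardsX -(card_in_imset injF) imF cardsT card_mx mul1n.
Qed.

Lemma dual_code_rowspan k n (G : 'M[R]_(k, n)) :
  dual_code (rowspan G) = [set u : 'rV_n | u *m G^T == 0].
Proof.
apply/setP=> u; rewrite !inE; apply/forallP/eqP=> [uG | uG c].
  apply/rowP=> i; have /implyP := uG (delta_mx 0 i *m G).
  move/(_ (rowspan_mulmx G (delta_mx 0 i)))/eqP.
  by rewrite trmx_mul mulmxA trmx_delta -colE => /rowP/(_ 0); rewrite !mxE.
by apply/implyP=> /rowspanP[x ->]; rewrite trmx_mul mulmxA uG mul0mx.
Qed.

Lemma dual_code_cap_sumT n (C1 C2 : {set 'rV[R]_n}) :
  code_sum C1 C2 = setT -> dual_code C1 :&: dual_code C2 = [set 0].
Proof.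
move=> sumT; apply/setP=> u; rewrite !inE.
apply/andP/eqP=> [[/forallP u1 /forallP u2] | ->]; last first.
  by split; apply/forallP=> c; rewrite mul0mx eqxx implybT.
apply/rowP=> i; have : delta_mx 0 i \in code_sum C1 C2 by rewrite sumT inE.
case/imset2P=> c1 c2 c1C c2C ei.
have /eqP := implyP (u1 c1) c1C; have /eqP := implyP (u2 c2) c2C.
have -> : u 0 i = (u *m (delta_mx 0 i : 'rV_n)^T) 0 0 by rewrite trmx_delta -colE !mxE.
by rewrite ei linearD mulmxDr => -> ->; rewrite addr0 !mxE.
Qed.

Lemma rowspanT_rows_freeP p r (A : 'M[R]_(p, r)) :
  rowspan A = setT -> rows_free A <-> p = r.
Proof.
move=> /rowspanT_card cardA; split=> [/rows_free_card | pr].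
  by rewrite cardA => /expn_card_inj.
by apply/rows_free_card; rewrite cardA pr.
Qed.

Lemma rows_free_rowspanTP p r (A : 'M[R]_(p, r)) :
  rows_free A -> rowspan A = setT <-> p = r.
Proof.
move=> /rows_free_card cardA; split=> [/rowspanT_card | pr].
  by rewrite cardA => /expn_card_inj.
by apply/rowspanT_card; rewrite cardA pr.
Qed.

Definition mx_onto k n (G : 'M[R]_(k, n)) : Prop :=
  forall y : 'cV_k, exists u : 'cV_n, G *m u = y.

Lemma mx_onto_rowspan_tr k n (G : 'M[R]_(k, n)) : mx_onto G -> rowspan G^T = setT.
Proof.
move=> ontoG; apply/eqP; rewrite eqEsubset subsetT; apply/subsetP=> y _.
by have [u uG] := ontoG y^T; apply/rowspanP; exists u^T; rewrite -trmx_mul uG trmxK.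
Qed.

Section Elimination.

Variables (k n : nat) (g : 'rV[R]_n) (G : 'M[R]_(k, n)) (c : 'cV[R]_k).

Lemma rows_free_col_mx_sub : rows_free (col_mx g G) -> rows_free (G - c *m g).
Proof.
move=> freeG x xG0.
have /eqP : row_mx (- (x *m c)) x = 0.
  by apply: freeG; rewrite mul_row_col mulNmx addrC -mulmxA -mulmxBr.
by rewrite row_mx_eq0 => /andP[_ /eqP].
Qed.

Lemma mx_onto_col_mx_sub : mx_onto (col_mx g (G - c *m g)) -> mx_onto (col_mx g G).
Proof.
move=> ontoG y; have [u] := ontoG (col_mx (usubmx y) (dsubmx y - c *m usubmx y)).
rewrite mul_col_mx => /eq_col_mx[gu]; rewrite mulmxBl -mulmxA gu => /addIr Gu.
by exists u; rewrite mul_col_mx gu Gu vsubmxK.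
Qed.

Lemma mx_onto_col_mx_pivot (j : 'I_n) :
  g 0 j \is a GRing.unit -> G *m (delta_mx j 0 : 'cV_n) = 0 ->
  mx_onto G -> mx_onto (col_mx g G).
Proof.
move=> gj_unit Gej ontoG y; have [w Gw] := ontoG (dsubmx y).
have gej : g *m delta_mx j 0 = (g 0 j)%:M by rewrite -colE [LHS]mx11_scalar mxE.
pose t : 'M_1 := (g 0 j)^-1 *: (usubmx y - g *m w).
exists (w + delta_mx j 0 *m t); rewrite mul_col_mx !mulmxDr !mulmxA gej Gej mul0mx.
rewrite addr0 Gw mul_scalar_mx scalerA mulrV // scale1r addrC subrK.
exact: vsubmxK.
Qed.

End Elimination.

Lemma rows_free_mul_tr k m n (G : 'M[R]_(k, n)) (H : 'M[R]_(m, n)) D :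
  rows_free H -> rowspan H = dual_code D ->
  dual_code (rowspan G) :&: dual_code D = [set 0] -> rows_free (H *m G^T).
Proof.
move=> freeH spanH capGD x; rewrite mulmxA => xHG0; apply: freeH; apply/set1P.
by rewrite -capGD inE dual_code_rowspan inE xHG0 eqxx -spanH rowspan_mulmx.
Qed.

End RowSpan.

Section LocalRing.

Variables (R : finComUnitRingType) (R_local : is_local_ring R).

Lemma local_unit_subr (a : R) : a \isn't a GRing.unit -> (1 - a) \is a GRing.unit.
Proof.
move=> a_nunit; apply: contraT => /R_local/(_ a_nunit).
by rewrite subrK unitr1.
Qed.

(* A nonzero s generating a minimal principal ideal: if s * a != 0 then
   s = s * a * r for some r, and 1 - a * r is a unit. *)
Lemma local_socle :
  exists2 s : R, s != 0 & forall a, a \isn't a GRing.unit -> s * a = 0.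
Proof.
pose I (s : R) := [set s * r | r : R].
have [s s_neq0 s_min] :=
  @arg_minnP R 1 (fun s => s != 0) (fun s => #|I s|) (oner_neq0 R).
exists s => // a a_nunit; apply: contraTeq s_neq0 => sa_neq0.
have : I (s * a) == I s.
  rewrite eqEcard s_min // andbT; apply/subsetP=> _ /imsetP[r _ ->].
  by rewrite -mulrA imset_f.
have s_Is : s \in I s by apply/imsetP; exists 1; rewrite ?mulr1.
move/eqP/setP/(_ s); rewrite s_Is => /imsetP[r _ s_sar].
have ar_nunit : a * r \isn't a GRing.unit by rewrite unitrM negb_and a_nunit.
rewrite negbK; apply/eqP; apply: (mulIr (local_unit_subr ar_nunit)).
by rewrite mulrBr mulr1 mulrA -s_sar subrr mul0r.
Qed.

Lemma rows_free_unit_entry k n (G : 'M[R]_(k, n)) (i : 'I_k) :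
  rows_free G -> exists j, G i j \is a GRing.unit.
Proof.
move=> freeG; have [s s_neq0 s_socle] := local_socle.
case: (pickP (fun j => G i j \is a GRing.unit)) => [j | nunit]; first by exists j.
have sG0 : s *: (delta_mx 0 i : 'rV_k) *m G = 0.
  by apply/rowP=> j; rewrite -scalemxAl -rowE !mxE s_socle ?nunit.
have /eqP := congr1 (fun v : 'rV_k => v 0 i) (freeG _ sG0).
by rewrite !mxE !eqxx mulr1 (negPf s_neq0).
Qed.

Lemma rows_free_onto k n (G : 'M[R]_(k, n)) : rows_free G -> mx_onto G.
Proof.
elim: k G => [|k IHk] G freeG.
  by move=> y; exists 0; apply/matrixP=> -[].
move: G freeG; rewrite -[k.+1]/(1 + k)%N => G; rewrite -[G]vsubmxK.
move: (usubmx G) (dsubmx G) => g {}G freeG.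
have [j] := rows_free_unit_entry (lshift k 0) freeG; rewrite col_mxEu => gj_unit.
pose e : 'cV[R]_n := delta_mx j 0.
pose c := (g 0 j)^-1 *: (G *m e).
apply: (@mx_onto_col_mx_sub _ _ _ _ _ c); apply: (mx_onto_col_mx_pivot gj_unit).
  have gej : g *m e = (g 0 j)%:M by rewrite -colE [LHS]mx11_scalar mxE.
  by rewrite mulmxBl -mulmxA gej mul_mx_scalar scalerA mulrV // scale1r subrr.
exact/IHk/rows_free_col_mx_sub.
Qed.

Lemma dual_code_dim k m n (G : 'M[R]_(k, n)) (H : 'M[R]_(m, n)) :
  rows_free G -> is_generator_matrix H (dual_code (rowspan G)) -> (k + m = n)%N.
Proof.
move=> freeG [freeH spanH]; apply: (@expn_card_inj R); rewrite expnD.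
have spanGT : rowspan G^T = setT by apply/mx_onto_rowspan_tr/rows_free_onto.
rewrite (card_rowspan_ker G^T) -dual_code_rowspan -spanH (rows_free_card H).1 //.
by rewrite (rowspanT_card _).1.
Qed.

Lemma residue_card_gt1 : (1 < residue_card R)%N.
Proof.
pose M := max_ideal R; have M0 : (0 : R) \in M by rewrite inE unitr0.
rewrite /residue_card leq_divRL; last by apply/card_gt0P; exists 0.
have disjM1 : [disjoint M & [set x + 1 | x in M]].
  apply/pred0P=> y /=; apply/negbTE/andP=> -[My /imsetP[x Mx y_x1]].
  move: My Mx; rewrite y_x1 !inE -(unitrN x) => /R_local/[apply].
  by rewrite addrC addKr unitr1.
have := max_card (M :|: [set x + 1 | x in M]).
rewrite cardsU disjoint_setI0 // cards0 subn0 card_imset ?addnn ?mul2n //.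
exact: addIr.
Qed.

Lemma Rank_q_rows_free p1 r1 p2 r2 (A1 : 'M[R]_(p1, r1)) (A2 : 'M[R]_(p2, r2)) :
  rows_free A1 -> rows_free A2 -> Rank_q A1 = Rank_q A2 <-> p1 = p2.
Proof.
move=> /rows_free_card cardA1 /rows_free_card cardA2.
rewrite /Rank_q cardA1 cardA2; split=> [|-> //].
by apply: trunc_log_expn_inj; [exact: residue_card_gt1 | exact: leq_div].
Qed.

End LocalRing.

Theorem corollary3p18 (R : finComUnitRingType)
  (HRloc : is_local_ring R) (HRfrob : is_frobenius R)
  (n k1 k2 m1 m2 : nat) (C1 C2 : {set 'rV[R]_n})
  (G1 : 'M[R]_(k1, n)) (G2 : 'M[R]_(k2, n))
  (H1 : 'M[R]_(m1, n)) (H2 : 'M[R]_(m2, n))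
  (HC1 : is_linear_code C1) (HC2 : is_linear_code C2)
  (HG1 : is_generator_matrix G1 C1) (HG2 : is_generator_matrix G2 C2)
  (HH1 : is_generator_matrix H1 (dual_code C1))
  (HH2 : is_generator_matrix H2 (dual_code C2))
  (Hsum : code_sum C1 C2 = [set: 'rV[R]_n]) :
  [/\ (is_LCP C1 C2 <-> mx_invertible (col_mx G1 G2)),
      (is_LCP C1 C2 <-> mx_invertible (col_mx H1 H2)) &
      (is_LCP C1 C2 <->
         (Rank_q (H2 *m G1^T) = Rank_q G1 \/ Rank_q (H1 *m G2^T) = Rank_q G2))].
Proof.
have [[free1 span1] [free2 span2]] := (HG1, HG2); subst C1 C2.
have [[freeH1 spanH1] [freeH2 spanH2]] := (HH1, HH2).
have dim1 := dual_code_dim HRloc free1 HH1; have dim2 := dual_code_dim HRloc free2 HH2.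
have capH := dual_code_cap_sumT Hsum.
have spanG : rowspan (col_mx G1 G2) = setT by rewrite rowspan_col_mx.
have LCP_free : is_LCP (rowspan G1) (rowspan G2) <-> rows_free (col_mx G1 G2).
  split=> [[capG _] | /(rows_free_col_mxP free1 free2) //].
  exact/(rows_free_col_mxP free1 free2).
have LCP_dim : is_LCP (rowspan G1) (rowspan G2) <-> (k1 + k2 = n)%N.
  exact: iff_trans LCP_free (rowspanT_rows_freeP spanG).
have freeH : rows_free (col_mx H1 H2).
  by apply/(rows_free_col_mxP freeH1 freeH2); rewrite spanH1 spanH2.
have rank21 := Rank_q_rows_free HRloc (rows_free_mul_tr freeH2 spanH2 capH) free1.
have rank12 := Rank_q_rows_free HRloc
  (rows_free_mul_tr freeH1 spanH1 (etrans (setIC _ _) capH)) free2.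
split.
- split=> [/LCP_free freeG | /mx_invertibleP[/LCP_free //]].
  exact/mx_invertibleP.
- split=> [/LCP_dim dimG | /mx_invertibleP[_ /(rows_free_rowspanTP freeH) dimH]].
    by apply/mx_invertibleP; split=> //; apply/(rows_free_rowspanTP freeH); lia.
  by apply/LCP_dim; lia.
- split=> [/LCP_dim dimG | [/rank21 | /rank12] dimH]; last 2 first.
  + by apply/LCP_dim; lia.
  + by apply/LCP_dim; lia.
  by left; apply/rank21; lia.
Qed.
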